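(* Let $L_0\in\mathbb{R}^{n\times n}$ have reduced SVD $L_0=U\Sigma V^*$, let $S_0\in\mathbb{R}^{n\times n}$ with support $\Omega$, and let $\lambda>0$. Assume $\|\mathcal{P}_\Omega\mathcal{P}_T\|<1$. Then $(L_0,S_0)$ is the unique solution of \[ \text{minimize } \|L\|_*+\lambda\|S\|_1\quad\text{subject to}\quad L+S=L_0+S_0 \] if there is a pair $(W,F)$ of $n\times n$ matrices obeying \[ UV^*+W=\lambda(\mathrm{sgn}(S_0)+F), \] with $\mathcal{P}_TW=0$, $\|W\|<1$, $\mathcal{P}_\Omega F=0$ and $\|F\|_\infty<1$.
   Context: $U,V\in\mathbb{R}^{n\times r}$ have orthonormal columns. $T=\{UX^*+YV^*: X,Y\in\mathbb{R}^{n\times r}\}$ and $\mathcal{P}_T$ is the orthogonal projection onto $T$ with respect to the trace inner product $\langle X,Y\rangle=\mathrm{trace}(X^*Y)$. $\mathcal{P}_\Omega X$ keeps the entries of $X$ in $\Omega$ and zeroes the others. For linear maps on matrices, $\|\cdot\|$ is the operator norm with respect to the Frobenius norm; for matrices, $\|W\|$ is the spectral norm (largest singular value), $\|F\|_\infty=\max_{ij}|F_{ij}|$, $\|\cdot\|_*$ the nuclear norm and $\|S\|_1=\sum_{ij}|S_{ij}|$. $\mathrm{sgn}(S_0)$ is the entrywise sign, with $\mathrm{sgn}(0)=0$. *)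

From HB Require Import structures.
From mathcomp Require Import all_boot all_order all_algebra.
From mathcomp Require Import boolp classical_sets reals.
Set Implicit Arguments. Unset Strict Implicit. Unset Printing Implicit Defensive.
Import Order.TTheory GRing.Theory Num.Theory.
Local Open Scope ring_scope.
Local Open Scope classical_set_scope.

Section Defs.
Variable R : realType.

Definition mxdot (m n : nat) (X Y : 'M[R]_(m, n)) : R := \tr (X^T *m Y).

Definition frob (m n : nat) (X : 'M[R]_(m, n)) : R := Num.sqrt (mxdot X X).

Definition orthogonal_mx (n : nat) (P : 'M[R]_n) : Prop := P^T *m P = 1%:M.

Definition is_sv_vector (n : nat) (X : 'M[R]_n) (d : 'rV[R]_n) : Prop :=
  (forall i, 0 <= d 0 i) /\
  exists P Q : 'M[R]_n, orthogonal_mx P /\ orthogonal_mx Q /\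
    X = P *m diag_mx d *m Q^T.

Definition nucnorm (n : nat) (X : 'M[R]_n) : R :=
  sup [set t | exists d, is_sv_vector X d /\ t = \sum_i d 0 i].

Definition specnorm (n : nat) (X : 'M[R]_n) : R :=
  sup [set t | exists d, is_sv_vector X d /\ t = \big[Num.max/0]_i d 0 i].

Definition l1norm (m n : nat) (S : 'M[R]_(m, n)) : R :=
  \sum_i \sum_j `|S i j|.

Definition linfnorm (m n : nat) (F : 'M[R]_(m, n)) : R :=
  \big[Num.max/0]_i \big[Num.max/0]_j `|F i j|.

Definition sgnmx (m n : nat) (S : 'M[R]_(m, n)) : 'M[R]_(m, n) :=
  \matrix_(i, j) Num.sg (S i j).

Definition POmega (m n : nat) (S0 X : 'M[R]_(m, n)) : 'M[R]_(m, n) :=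
  \matrix_(i, j) (if S0 i j != 0 then X i j else 0).

Definition inT (n r : nat) (U V : 'M[R]_(n, r)) (Z : 'M[R]_n) : Prop :=
  exists X Y : 'M[R]_(n, r), Z = U *m X^T + Y *m V^T.

Definition is_orth_proj_T (n r : nat) (U V : 'M[R]_(n, r))
  (PT : 'M[R]_n -> 'M[R]_n) : Prop :=
  forall X, inT U V (PT X) /\ (forall Z, inT U V Z -> mxdot (X - PT X) Z = 0).

Definition opnorm (n : nat) (f : 'M[R]_n -> 'M[R]_n) : R :=
  sup [set t | exists X : 'M[R]_n, frob X <= 1 /\ t = frob (f X)].

End Defs.

From HB Require Import structures.
From mathcomp Require Import all_boot all_order all_algebra.
From mathcomp Require Import classical_sets reals.
From mathcomp Require Import complex.
From mathcomp Require Import ring lra.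
Import Order.TTheory GRing.Theory Num.Theory.
Local Open Scope ring_scope.

(* The certificate (W, F) makes [U V^T + W0] and [sgn S0 + F] subgradients of
   the two norms at (L0, S0), where W0 is the polar factor of the part of a
   perturbation H orthogonal to T.  Moving from (L0, S0) to (L0 + H, S0 - H)
   then increases the objective by at least (1 - ||W||) ||P_T^perp H||_* +
   lambda (1 - ||F||_inf) ||P_Omega^perp H||_1.  If this gap vanishes, H lies
   in T and is supported in Omega, so H = P_Omega P_T H, which forces H = 0
   because ||P_Omega P_T|| < 1.  The nuclear-norm estimates need the existence
   of an SVD, proved by induction via Householder reflections. *)

Section TraceInnerProduct.
Context {R : realType}.

Lemma mxdotE {m n} (X Y : 'M[R]_(m, n)) :
  mxdot X Y = \sum_i \sum_j X i j * Y i j.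
Proof.
rewrite /mxdot /mxtrace exchange_big /=; apply: eq_bigr => j _.
by rewrite !mxE; apply: eq_bigr => i _; rewrite mxE.
Qed.

Lemma mxdotC {m n} (X Y : 'M[R]_(m, n)) : mxdot X Y = mxdot Y X.
Proof. by rewrite !mxdotE; apply: eq_bigr => i _; apply: eq_bigr => j _; rewrite mulrC. Qed.

Lemma mxdotDr {m n} (X Y Z : 'M[R]_(m, n)) : mxdot X (Y + Z) = mxdot X Y + mxdot X Z.
Proof. by rewrite /mxdot mulmxDr mxtraceD. Qed.

Lemma mxdotDl {m n} (X Y Z : 'M[R]_(m, n)) : mxdot (Y + Z) X = mxdot Y X + mxdot Z X.
Proof. by rewrite mxdotC mxdotDr !(mxdotC X). Qed.

Lemma mxdotZr {m n} a (X Y : 'M[R]_(m, n)) : mxdot X (a *: Y) = a * mxdot X Y.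
Proof. by rewrite /mxdot -scalemxAr mxtraceZ. Qed.

Lemma mxdotZl {m n} a (X Y : 'M[R]_(m, n)) : mxdot (a *: X) Y = a * mxdot X Y.
Proof. by rewrite mxdotC mxdotZr mxdotC. Qed.

Lemma mxdotNr {m n} (X Y : 'M[R]_(m, n)) : mxdot X (- Y) = - mxdot X Y.
Proof. by rewrite -scaleN1r mxdotZr mulN1r. Qed.

Lemma mxdotNl {m n} (X Y : 'M[R]_(m, n)) : mxdot (- X) Y = - mxdot X Y.
Proof. by rewrite mxdotC mxdotNr mxdotC. Qed.

Lemma mxdotBr {m n} (X Y Z : 'M[R]_(m, n)) : mxdot X (Y - Z) = mxdot X Y - mxdot X Z.
Proof. by rewrite mxdotDr mxdotNr. Qed.

Lemma mxdotBl {m n} (X Y Z : 'M[R]_(m, n)) : mxdot (Y - Z) X = mxdot Y X - mxdot Z X.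
Proof. by rewrite mxdotDl mxdotNl. Qed.

Lemma mxdot0r {m n} (X : 'M[R]_(m, n)) : mxdot X 0 = 0.
Proof. by rewrite /mxdot mulmx0 linear0. Qed.

Lemma mxdot0l {m n} (X : 'M[R]_(m, n)) : mxdot 0 X = 0.
Proof. by rewrite mxdotC mxdot0r. Qed.

Lemma mxdot_ge0 {m n} (X : 'M[R]_(m, n)) : 0 <= mxdot X X.
Proof. by rewrite mxdotE; do 2!apply: sumr_ge0 => ? _; rewrite -expr2 sqr_ge0. Qed.

Lemma mxdot_eq0 {m n} (X : 'M[R]_(m, n)) : mxdot X X = 0 -> X = 0.
Proof.
have sq0 (x : R) : 0 <= x * x by rewrite -expr2 sqr_ge0.
rewrite mxdotE => /eqP; rewrite psumr_eq0 => [/allP X0|i _]; last exact: sumr_ge0.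
apply/matrixP => i j; have /X0 := mem_index_enum i.
rewrite /= psumr_eq0 // => /allP/(_ j (mem_index_enum j)).
by rewrite mxE -expr2 sqrf_eq0 => /eqP.
Qed.

Lemma mxdotMl {m n p} (A : 'M[R]_(m, n)) (X : 'M[R]_(n, p)) Y :
  mxdot (A *m X) Y = mxdot X (A^T *m Y).
Proof. by rewrite /mxdot trmx_mul !mulmxA. Qed.

Lemma mxdotMr {m n p} (B : 'M[R]_(n, p)) (X : 'M[R]_(m, n)) Y :
  mxdot (X *m B) Y = mxdot X (Y *m B^T).
Proof. by rewrite /mxdot trmx_mul -mulmxA mxtrace_mulC !mulmxA. Qed.

Lemma mxdot_conj_orth {n k} (A B : 'M[R]_(n, k)) (X Y : 'M[R]_k) :
  A^T *m A = 1%:M -> B^T *m B = 1%:M ->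
  mxdot (A *m X *m B^T) (A *m Y *m B^T) = mxdot X Y.
Proof.
move=> hA hB; rewrite -mulmxA mxdotMl mxdotMr trmxK !mulmxA hA mul1mx.
by rewrite -mulmxA hB mulmx1.
Qed.

Lemma mxdot_row {n} (u v : 'rV[R]_n) : mxdot u v = (u *m v^T) 0 0.
Proof. by rewrite /mxdot mxtrace_mulC -[v *m u^T]trmxK trmx_mul trmxK /mxtrace big_ord1 mxE. Qed.

Lemma mxdot_diag {n} (d : 'rV[R]_n) (N : 'M[R]_n) :
  mxdot (diag_mx d) N = \sum_i d 0 i * N i i.
Proof.
rewrite mxdotE; apply: eq_bigr => i _; rewrite (bigD1 i) //= big1 ?addr0.
  by rewrite mxE eqxx mulr1n.
by move=> j /negbTE ji; rewrite mxE eq_sym ji mulr0n mul0r.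
Qed.

Lemma mxdot_CauchySchwarz {m n} (X Y : 'M[R]_(m, n)) :
  mxdot X Y ^+ 2 <= mxdot X X * mxdot Y Y.
Proof.
have [/mxdot_eq0 ->|Yn0] := eqVneq (mxdot Y Y) 0; first by rewrite !mxdot0r expr0n mulr0.
have Yp : 0 < mxdot Y Y by rewrite lt_def Yn0 mxdot_ge0.
have := mxdot_ge0 (X - (mxdot X Y / mxdot Y Y) *: Y).
rewrite !(mxdotBl, mxdotBr, mxdotZl, mxdotZr) (mxdotC Y X) => h.
rewrite -subr_ge0.
have -> : mxdot X X * mxdot Y Y - mxdot X Y ^+ 2 = mxdot Y Y *
    (mxdot X X - mxdot X Y / mxdot Y Y * mxdot X Y -
     mxdot X Y / mxdot Y Y * (mxdot X Y - mxdot X Y / mxdot Y Y * mxdot Y Y)).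
  by field.
exact: mulr_ge0 (ltW Yp) h.
Qed.

Lemma unit_multiple {m n} {v : 'M[R]_(m, n)} : v != 0 ->
  exists2 c : R, 0 < c & mxdot (c *: v) (c *: v) = 1.
Proof.
move=> vn0; have vp : 0 < mxdot v v.
  by rewrite lt_def mxdot_ge0 andbT; apply: contra vn0 => /eqP/mxdot_eq0 ->.
exists (Num.sqrt (mxdot v v))^-1; first by rewrite invr_gt0 sqrtr_gt0.
by rewrite mxdotZl mxdotZr mulrA -expr2 exprVn sqr_sqrtr ?ltW // mulVf ?gt_eqF.
Qed.

End TraceInnerProduct.

Section SingularValueDecomposition.
Context {R : realType}.

Lemma symmetric_eigenvector {n} {A : 'M[R]_n.+1} : A^T = A ->
  exists (a : R) (v : 'rV[R]_n.+1), v != 0 /\ v *m A = a *: v.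
Proof.
(* The spectral theorem over R[i] gives a real eigenvalue, which is then a root
   of the characteristic polynomial of A over R. *)
move=> As; pose f := @real_complex_def R (Phant R); pose Ac := map_mx f A.
have herm : Ac \is hermsymmx.
  apply: realsym_hermsym.
    apply/is_hermitianmxP; rewrite expr0 scale1r map_mx_id //.
    by rewrite /Ac map_trmx As.
  apply/mxOverP => i j; rewrite mxE /f.
  by rewrite realE -[0 : R[i]]/(f 0) /f !lecR -realE num_real.
have /hermitian_normalmx /orthomx_spectralP Aeq := herm.
set P := spectralmx Ac in Aeq; set d := spectral_diag Ac in Aeq.
have Pu : P \in unitmx by apply: spectral_unit.
pose w := (delta_mx 0 (0 : 'I_n.+1) : 'rV[R[i]]_n.+1) *m P.
have ev : eigenvalue Ac (d 0 0).
  apply/eigenvalueP; exists w.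
    rewrite /w Aeq !mulmxA mulmxK // scalemxAl; congr (_ *m _).
    apply/rowP => j; rewrite !mxE (bigD1 0) //= big1 ?addr0.
      rewrite !mxE eqxx /= mul1r.
      by case: (altP (j =P 0)) => [->|nj]; rewrite ?eqxx ?mulr1 // eq_sym (negbTE nj) ?mulr0.
    by move=> k nk; rewrite !mxE (negbTE nk) mul0r.
  rewrite /w mulmx_free_eq0 ?row_free_unit //.
  by apply/eqP => /matrixP/(_ 0 0); rewrite !mxE eqxx /= => /eqP; rewrite oner_eq0.
have d0r : d 0 0 \is Num.real.
  exact: (mxOverP (hermitian_spectral_diag_real herm)).
exists (complex.Re (d 0 0)).
suff /eigenvalueP[v vA v0] : eigenvalue A (complex.Re (d 0 0)) by exists v.
rewrite eigenvalue_root_char -(fmorph_root f) map_char_poly -eigenvalue_root_char.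
have E : f (complex.Re (d 0 0)) = d 0 0.
  by rewrite /f; have -> := complexRe (d 0 0); apply/Creal_ReP.
by move: ev; rewrite -E.
Qed.

Lemma householder_reflection {n} {x : 'rV[R]_n.+1} : mxdot x x = 1 ->
  exists H : 'M[R]_n.+1, [/\ H^T = H, H *m H = 1%:M & delta_mx 0 0 *m H = x].
Proof.
move=> xu; set e := delta_mx 0 0 : 'rV_n.+1.
have mul_e (y : 'rV[R]_n.+1) : y *m e^T = (y 0 0)%:M.
  by rewrite trmx_delta -colE [LHS]mx11_scalar mxE.
have ee : mxdot e e = 1 by rewrite mxdot_row mul_e !mxE eqxx.
have xe : mxdot x e = x 0 0 by rewrite mxdot_row mul_e mxE eqxx.
have [->|xne] := eqVneq x e; first by exists 1%:M; split; rewrite ?trmx1 ?mulmx1.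
set w := x - e.
have cw : mxdot w w = - 2 * w 0 0.
  have -> : w 0 0 = x 0 0 - 1 by rewrite !mxE eqxx.
  rewrite /w !(mxdotBl, mxdotBr) xu ee xe (mxdotC e x) xe; ring.
have wn0 : mxdot w w != 0 by apply/eqP => /mxdot_eq0/eqP; rewrite subr_eq0 (negbTE xne).
have w0n0 : w 0 0 != 0 by apply: contra wn0; rewrite cw => /eqP ->; rewrite mulr0.
set k := 2 / mxdot w w.
have ww : w *m w^T = (mxdot w w)%:M by rewrite mxdot_row -mx11_scalar.
have ew : e *m w^T = (w 0 0)%:M by rewrite -[e *m _]trmxK trmx_mul trmxK mul_e tr_scalar_mx.
have xw : x = e + w by rewrite /w addrC subrK.
clearbody w; exists (1%:M - k *: (w^T *m w)); split.
- by rewrite raddfB /= linearZ /= trmx1 trmx_mul trmxK.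
- rewrite mulmxBl !mulmxBr !mul1mx ?mulmx1 -!scalemxAl -!scalemxAr scalerA.
  rewrite mulmxA -(mulmxA w^T) ww mul_mx_scalar -scalemxAl scalerA.
  have -> : k * k * mxdot w w = k + k by rewrite /k; field.
  by rewrite scalerDl opprB addrK subrK.
- rewrite mulmxBr mulmx1 -scalemxAr mulmxA ew mul_scalar_mx scalerA.
  have -> : k * w 0 0 = -1 by rewrite /k cw; field.
  by rewrite scaleN1r opprK xw.
Qed.

Lemma singular_pair {n} (X : 'M[R]_n.+1) :
  exists (s : R) (u v : 'rV[R]_n.+1), [/\ 0 <= s, mxdot u u = 1, mxdot v v = 1,
    u *m X = s *: v & v *m X^T = s *: u].
Proof.
have Xs : (X^T *m X)^T = X^T *m X by rewrite trmx_mul trmxK.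
have [r [v0 [v0n0 vA]]] := symmetric_eigenvector Xs.
have [c cp vu] := unit_multiple v0n0; set v := c *: v0 in vu.
set w := v *m X^T.
have wX : w *m X = r *: v by rewrite /w -mulmxA /v -scalemxAl vA !scalerA mulrC.
have ww : mxdot w w = r by rewrite {1}/w mxdotMr trmxK wX mxdotZr vu mulr1.
have [w0|wn0] := eqVneq w 0.
  have : \det X = 0.
    rewrite -det_tr; apply/eqP/det0P; exists v => //.
    by rewrite /v scaler_eq0 negb_or gt_eqF.
  move/eqP/det0P => [u0 u0n0 u0X]; have [c' _ uu] := unit_multiple u0n0.
  exists 0, (c' *: u0), v; split => //.
  - by rewrite -scalemxAl u0X scaler0 scale0r.
  - by rewrite -/w w0 scale0r.
have rp : 0 < r.
  by rewrite -ww lt_def mxdot_ge0 andbT; apply: contra wn0 => /eqP/mxdot_eq0 ->.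
set s := Num.sqrt r; have sp : 0 < s by rewrite sqrtr_gt0.
have ss : s * s = r by rewrite -expr2 sqr_sqrtr // ltW.
have sn0 := lt0r_neq0 sp.
exists s, (s^-1 *: w), v; split => //.
- exact: ltW.
- by rewrite mxdotZl mxdotZr ww mulrA -ss; field.
- by rewrite -scalemxAl wX scalerA -ss; congr (_ *: _); field.
- by rewrite scalerA mulfV ?scale1r.
Qed.

Lemma block_of_singular_row_col {n} (Y : 'M[R]_(1 + n)) (s : R) :
  let e := delta_mx 0 0 : 'rV[R]_(1 + n) in e *m Y = s *: e -> e *m Y^T = s *: e ->
  Y = block_mx (s%:M : 'M_1) 0 0 (drsubmx Y).
Proof.
move=> e eY eYt.
have row0 j : Y 0 j = s * (j == 0)%:R.
  by have := congr1 (fun M : 'rV[R]_(1 + n) => M 0 j) eY; rewrite -rowE !mxE eqxx.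
have col0 i : Y i 0 = s * (i == 0)%:R.
  by have := congr1 (fun M : 'rV[R]_(1 + n) => M 0 i) eYt; rewrite -rowE !mxE eqxx.
have l0 : lshift n (0 : 'I_1) = 0 :> 'I_(1 + n) by apply/val_inj.
have r0 (j : 'I_n) : (rshift 1 j == 0 :> 'I_(1 + n)) = false by rewrite -val_eqE.
rewrite -{1}(submxK Y); congr block_mx; apply/matrixP => i j.
- by rewrite !ord1 !mxE l0 row0 eqxx mulr1.
- by rewrite !ord1 !mxE l0 row0 r0 mulr0.
- by rewrite !ord1 !mxE l0 col0 r0 mulr0.
Qed.

Lemma orthogonal_mx_block {n} (H : 'M[R]_(1 + n)) (P : 'M[R]_n) :
  orthogonal_mx H -> orthogonal_mx P ->
  orthogonal_mx (H *m block_mx (1%:M : 'M_1) 0 0 P).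
Proof.
rewrite /orthogonal_mx => HH PP.
rewrite trmx_mul mulmxA -(mulmxA _ H^T H) HH mulmx1 tr_block_mx mulmx_block.
by rewrite !trmx0 trmx1 !mulmx0 !mul0mx !mulmx1 !addr0 !add0r PP -scalar_mx_block.
Qed.

Lemma block_svd {n} (s : R) (P Q : 'M[R]_n) (d : 'rV[R]_n) :
  block_mx (s%:M : 'M_1) 0 0 (P *m diag_mx d *m Q^T) =
  block_mx 1%:M 0 0 P *m diag_mx (row_mx (s%:M : 'rV_1) d) *m (block_mx 1%:M 0 0 Q)^T.
Proof.
rewrite diag_mx_row tr_block_mx !mulmx_block !trmx0 trmx1 !mulmx0 !mul0mx.
rewrite !mulmx1 !mul1mx !addr0 !add0r mul0mx; congr block_mx.
by apply/matrixP => i j; rewrite !ord1 !mxE eqxx mulr1n.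
Qed.

Lemma svd_exists {n} (X : 'M[R]_n) : exists d, is_sv_vector X d.
Proof.
elim: n X => [|n IH] X.
  exists 0; split=> [i|]; first by rewrite mxE.
  by exists 1%:M, 1%:M; rewrite /orthogonal_mx trmx1 mulmx1; do 2!split=> //; apply/matrixP => -[].
have [s [u [v [s0 uu vv uX vX]]]] := singular_pair X.
have [Hu [HuT HuH eHu]] := householder_reflection uu.
have [Hv [HvT HvH eHv]] := householder_reflection vv.
set Y := Hu *m X *m Hv.
have XY : X = Hu *m Y *m Hv by rewrite /Y !mulmxA HuH mul1mx -mulmxA HvH mulmx1.
have Yb : Y = block_mx (s%:M : 'M_1) 0 0 (drsubmx (Y : 'M_(1 + n))).
  apply: block_of_singular_row_col.
    by rewrite /Y !mulmxA eHu uX -scalemxAl -eHv -mulmxA HvH mulmx1.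
  by rewrite /Y !trmx_mul HuT HvT !mulmxA eHv vX -scalemxAl -eHu -mulmxA HuH mulmx1.
have [d' [d'0 [P' [Q' [P'o [Q'o Y']]]]]] := IH (drsubmx (Y : 'M_(1 + n))).
exists (row_mx (s%:M : 'rV_1) d'); split.
  by move=> i; rewrite mxE; case: splitP => j _; rewrite ?ord1 ?mxE ?mulr1n.
exists (Hu *m block_mx (1%:M : 'M_1) 0 0 P'), (Hv *m block_mx (1%:M : 'M_1) 0 0 Q').
split; [|split]; rewrite -/(orthogonal_mx _).
- by apply: orthogonal_mx_block; rewrite // /orthogonal_mx HuT.
- by apply: orthogonal_mx_block; rewrite // /orthogonal_mx HvT.
by rewrite XY Yb Y' block_svd trmx_mul HvT !mulmxA.
Qed.

End SingularValueDecomposition.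

Section MatrixNorms.
Context {R : realType}.

Definition mx_lipschitz {n} (c : R) (M : 'M[R]_n) :=
  forall y : 'cV[R]_n, mxdot (M *m y) (M *m y) <= c ^+ 2 * mxdot y y.

Lemma mx_lipschitz_conj_orth {n} (P Q : 'M[R]_n) (e : 'rV[R]_n) b :
  orthogonal_mx P -> orthogonal_mx Q -> (forall i, 0 <= e 0 i <= b) ->
  mx_lipschitz b (P *m diag_mx e *m Q^T).
Proof.
move=> hP hQ he y; rewrite -!mulmxA mxdotMl (mulmxA P^T P) hP mul1mx.
have -> : mxdot y y = mxdot (Q^T *m y) (Q^T *m y).
  by rewrite mxdotMl trmxK mulmxA (mulmx1C hQ) mul1mx.
set z := Q^T *m y; rewrite !mxdotE mulr_sumr; apply: ler_sum => i _.
rewrite !big_ord1 mul_diag_mx mxE; have /andP[e0 eb] := he i.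
have ee : e 0 i * e 0 i <= b ^+ 2 by rewrite expr2; apply: ler_pM.
by rewrite mulrACA; apply: ler_wpM2r => //; rewrite -expr2 sqr_ge0.
Qed.

Lemma mx_lipschitz_orth {n} {P Q : 'M[R]_n} :
  orthogonal_mx P -> orthogonal_mx Q -> mx_lipschitz 1 (P *m Q^T).
Proof.
move=> hP hQ; rewrite -[P]mulmx1 -diag_const_mx.
by apply: mx_lipschitz_conj_orth => // i; rewrite mxE ler01 lexx.
Qed.

(* Pairing M against A diag(d) B^T is a sum of d i times <a_i, M b_i> over unit
   columns a_i, b_i, each term being at most c by Cauchy-Schwarz. *)
Lemma mxdot_lipschitz_svd_le {n k} {M : 'M[R]_n} {c} {A B : 'M[R]_(n, k)} {d : 'rV[R]_k} :
  0 <= c -> mx_lipschitz c M -> A^T *m A = 1%:M -> B^T *m B = 1%:M ->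
  (forall i, 0 <= d 0 i) ->
  mxdot M (A *m diag_mx d *m B^T) <= c * \sum_i d 0 i.
Proof.
move=> c0 hM hA hB d0.
have entry (C D : 'M[R]_(n, k)) (N : 'M[R]_n) i :
    (C^T *m N *m D) i i = mxdot (col i C) (N *m col i D).
  rewrite /mxdot /mxtrace big_ord1 colE colE trmx_mul trmx_delta.
  by rewrite !mulmxA -colE -!mulmxA -rowE [RHS]mxE [RHS]mxE !mulmxA.
have col_unit (C : 'M[R]_(n, k)) i : C^T *m C = 1%:M -> mxdot (col i C) (col i C) = 1.
  by move=> hC; have := entry C C 1%:M i; rewrite mulmx1 hC mul1mx mxE eqxx.
rewrite mxdotC -mulmxA mxdotMl mxdotMr trmxK mxdot_diag mulr_sumr.
apply: ler_sum => i _; rewrite mulrC; apply: ler_wpM2r => //; rewrite entry.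
have := mxdot_CauchySchwarz (col i A) (M *m col i B).
rewrite col_unit // mul1r => /le_trans/(_ (hM (col i B))); rewrite col_unit // mulr1.
by move=> h; nra.
Qed.

Lemma mxdot_orth_svd {n k} (A B : 'M[R]_(n, k)) (d : 'rV[R]_k) :
  A^T *m A = 1%:M -> B^T *m B = 1%:M ->
  mxdot (A *m B^T) (A *m diag_mx d *m B^T) = \sum_i d 0 i.
Proof.
move=> hA hB; rewrite -{1}[A]mulmx1 mxdot_conj_orth // mxdotC mxdot_diag.
by apply: eq_bigr => i _; rewrite mxE eqxx mulr1.
Qed.

Lemma nucnorm_has_ubound {n} (X : 'M[R]_n) :
  has_ubound [set t | exists d, is_sv_vector X d /\ t = \sum_i d 0 i].
Proof.
exists (1 + n%:R * mxdot X X) => _ [d [[_ [P [Q [hP [hQ ->]]]]] ->]].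
rewrite -(mxdot_orth_svd _ _ d hP hQ); set x := mxdot (P *m Q^T) _.
suff : x ^+ 2 <= n%:R * mxdot (P *m diag_mx d *m Q^T) (P *m diag_mx d *m Q^T) by nra.
apply: le_trans (mxdot_CauchySchwarz _ _) _.
by rewrite -{1 2}[P]mulmx1 mxdot_conj_orth // /mxdot trmx1 mulmx1 mxtrace1.
Qed.

Lemma mxdot_le_nucnorm {n} {M : 'M[R]_n} (X : 'M[R]_n) : mx_lipschitz 1 M -> mxdot M X <= nucnorm X.
Proof.
move=> hM; have [d hd] := svd_exists X; have [d0 [P [Q [hP [hQ hX]]]]] := hd.
apply: (@le_trans _ _ (\sum_i d 0 i)).
  by rewrite hX -[\sum_i _]mul1r; apply: mxdot_lipschitz_svd_le.
by apply: (ub_le_sup (nucnorm_has_ubound X)); exists d.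
Qed.

Lemma nucnorm_le_sum {n r} (U V : 'M[R]_(n, r)) (s : 'rV[R]_r) :
  U^T *m U = 1%:M -> V^T *m V = 1%:M -> (forall i, 0 <= s 0 i) ->
  nucnorm (U *m diag_mx s *m V^T) <= \sum_i s 0 i.
Proof.
move=> hU hV hs; apply: ge_sup.
  by have [d hd] := svd_exists (U *m diag_mx s *m V^T); exists (\sum_i d 0 i), d.
move=> _ [d [[_ [P [Q [hP [hQ hX]]]]] ->]].
rewrite -(mxdot_orth_svd _ _ d hP hQ) -hX -[\sum_i _]mul1r.
exact: mxdot_lipschitz_svd_le ler01 (mx_lipschitz_orth hP hQ) hU hV hs.
Qed.

Lemma specnorm_lipschitz {n} (W : 'M[R]_n) :
  exists b, [/\ 0 <= b, b <= specnorm W & mx_lipschitz b W].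
Proof.
have [e he] := svd_exists W; have [e0 [P [Q [hP [hQ hW]]]]] := he.
exists (\big[Num.max/0]_i e 0 i); split.
- exact: bigmax_ge_id.
- apply: ub_le_sup; last by exists e.
  exists (1 + mxdot W W) => _ [e' [[e'0 [P' [Q' [hP' [hQ' hW']]]]] ->]].
  apply: bigmax_le => [|i _]; first by rewrite addr_ge0 ?mxdot_ge0.
  suff : e' 0 i ^+ 2 <= mxdot W W by nra.
  rewrite hW' mxdot_conj_orth // mxdot_diag (bigD1 i) //= mxE eqxx mulr1n -expr2.
  rewrite lerDl; apply: sumr_ge0 => j _; rewrite mxE eqxx mulr1n; exact: mulr_ge0.
- rewrite hW; apply: mx_lipschitz_conj_orth => // i.
  by rewrite e0 le_bigmax.
Qed.

(* W0 = P diag(1_{d > 0}) Q^T for an SVD G = P diag(d) Q^T; it factors through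
   G on both sides because 1_{d > 0} = d d^{-1}. *)
Lemma polar_factor {n} (G : 'M[R]_n) : exists W0 : 'M[R]_n,
  [/\ mx_lipschitz 1 W0, (exists N, W0 = N *m G), (exists M, W0 = G *m M) &
      forall b W, 0 <= b -> mx_lipschitz b W -> mxdot W G <= b * mxdot W0 G].
Proof.
have [d hd] := svd_exists G; have [d0 [P [Q [hP [hQ hG]]]]] := hd.
pose t := \row_i (d 0 i)^-1; pose s := \row_i (d 0 i * t 0 i).
have diag_mulmx (a b : 'rV[R]_n) :
    diag_mx a *m diag_mx b = diag_mx (\row_i (a 0 i * b 0 i)).
  apply/matrixP => i j; rewrite mul_diag_mx !mxE.
  by case: (i == j); rewrite ?mulr1n ?mulr0n ?mulr0.
have sd i : s 0 i * d 0 i = d 0 i.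
  rewrite !mxE; have [->|dn0] := eqVneq (d 0 i) 0; first by rewrite !mul0r.
  by rewrite mulfV // mul1r.
exists (P *m diag_mx s *m Q^T); split.
- apply: mx_lipschitz_conj_orth => // i; rewrite !mxE.
  have [->|dn0] := eqVneq (d 0 i) 0; first by rewrite mul0r lexx ler01.
  by rewrite mulfV // ler01 lexx.
- exists (P *m diag_mx t *m P^T); rewrite hG !mulmxA -(mulmxA _ P^T P) hP mulmx1.
  rewrite -(mulmxA P (diag_mx t)) diag_mulmx; congr (P *m diag_mx _ *m _).
  by apply/rowP => i; rewrite !mxE mulrC.
- exists (Q *m diag_mx t *m Q^T).
  by rewrite hG -!mulmxA (mulmxA Q^T) hQ mul1mx (mulmxA (diag_mx d)) diag_mulmx.
- move=> b W b0 hW; rewrite {2}hG mxdot_conj_orth // mxdot_diag.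
  have -> : \sum_i s 0 i * diag_mx d i i = \sum_i d 0 i.
    by apply: eq_bigr => i _; rewrite [diag_mx d i i]mxE eqxx mulr1n sd.
  by rewrite hG; exact: mxdot_lipschitz_svd_le.
Qed.

Lemma pairing_bound_ge0_eq0 {n} {G : 'M[R]_n} {nu} :
  (forall b W, 0 <= b -> mx_lipschitz b W -> mxdot W G <= b * nu) ->
  0 <= nu /\ (nu = 0 -> G = 0).
Proof.
move=> hG; split.
  have lip0 : mx_lipschitz 1 (0 : 'M[R]_n).
    by move=> y; rewrite mul0mx mxdot0l expr1n mul1r mxdot_ge0.
  by have := hG 1 0 ler01 lip0; rewrite mxdot0l mul1r.
move=> nu0; have [c [c0 _ hc]] := specnorm_lipschitz G.
by apply: mxdot_eq0; apply/le_anti; rewrite mxdot_ge0 andbT -(mulr0 c) -nu0 hG.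
Qed.

End MatrixNorms.

Section TangentSpace.
Context {R : realType} {n r : nat} (U V : 'M[R]_(n, r)).

Lemma inTB {Z1 Z2} : inT U V Z1 -> inT U V Z2 -> inT U V (Z1 - Z2).
Proof.
move=> [X1 [Y1 ->]] [X2 [Y2 ->]]; exists (X1 - X2), (Y1 - Y2).
by rewrite raddfB /= mulmxBr mulmxBl opprD addrACA.
Qed.

Lemma inTZ c {Z} : inT U V Z -> inT U V (c *: Z).
Proof.
move=> [X [Y ->]]; exists (c *: X), (c *: Y).
by rewrite linearZ /= -scalemxAr -scalemxAl scalerDr.
Qed.

Lemma inT_complement H :
  inT U V (H - (1%:M - U *m U^T) *m H *m (1%:M - V *m V^T)).
Proof.
exists (H^T *m U), (H *m V - U *m (U^T *m H *m V)).
rewrite trmx_mul trmxK !(mulmxBl, mulmxBr) !mul1mx !mulmx1 !mulmxA.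
by rewrite -addrA -opprD subKr.
Qed.

Lemma mxdot_annihilator_inT {W Z} :
  U^T *m W = 0 -> W *m V = 0 -> inT U V Z -> mxdot W Z = 0.
Proof.
move=> hUW hWV [X [Y ->]].
rewrite mxdotDr mxdotC mxdotMl hUW mxdot0r add0r mxdotC mxdotMr trmxK hWV.
exact: mxdot0r.
Qed.

Lemma mx_lipschitz_orth_sum {W0} :
  U^T *m U = 1%:M -> V^T *m V = 1%:M -> U^T *m W0 = 0 -> W0 *m V = 0 ->
  mx_lipschitz 1 W0 -> mx_lipschitz 1 (U *m V^T + W0).
Proof.
(* U V^T acts on the range of V and W0 on its orthogonal complement, and their
   images are orthogonal as well. *)
move=> hU hV hUW hWV hW y; set z := V^T *m y.
have e1 : mxdot (U *m z) (W0 *m y) = 0 by rewrite mxdotMl mulmxA hUW mul0mx mxdot0r.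
have e2 : mxdot (U *m z) (U *m z) = mxdot z z by rewrite mxdotMl mulmxA hU mul1mx.
have e3 : W0 *m y = W0 *m (y - V *m z) by rewrite mulmxBr mulmxA hWV mul0mx subr0.
have e4 : mxdot (y - V *m z) (y - V *m z) = mxdot y y - mxdot z z.
  rewrite !(mxdotBl, mxdotBr) (mxdotC y (V *m z)) mxdotMl -/z mxdotMl mulmxA hV mul1mx.
  ring.
have := hW (y - V *m z); rewrite -e3 e4 expr1n !mul1r => h.
rewrite mulmxDl -mulmxA -/z !(mxdotDl, mxdotDr) e1 (mxdotC (W0 *m y)) e1 e2.
lra.
Qed.

Section Projection.
Context {PT : 'M[R]_n -> 'M[R]_n}.
Hypothesis hPT : is_orth_proj_T U V PT.

Lemma orth_proj_T_id {Z} : inT U V Z -> PT Z = Z.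
Proof.
move=> hZ; have [hT horth] := hPT Z.
have /eqP := horth _ (inTB hT hZ).
rewrite -opprB mxdotNl oppr_eq0 => /eqP/mxdot_eq0/eqP.
by rewrite subr_eq0 => /eqP.
Qed.

Lemma orth_proj_T_contract X : mxdot (PT X) (PT X) <= mxdot X X.
Proof.
have [hT horth] := hPT X; have h0 := horth _ hT.
have -> : mxdot X X = mxdot (X - PT X + PT X) (X - PT X + PT X) by rewrite subrK.
move: (X - PT X) h0 => Y h0.
rewrite mxdotDl !mxdotDr h0 (mxdotC (PT X)) h0 add0r addr0 lerDr.
exact: mxdot_ge0.
Qed.

Lemma orth_proj_T_eq0_orth {W Z} : PT W = 0 -> inT U V Z -> mxdot W Z = 0.
Proof. by move=> hW hZ; have [_ /(_ Z hZ)] := hPT W; rewrite hW subr0. Qed.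

End Projection.
End TangentSpace.

Lemma nucnorm_subgradient {R : realType} {n r} (U V : 'M[R]_(n, r)) (sigma : 'rV[R]_r)
    (W0 H : 'M[R]_n) :
  U^T *m U = 1%:M -> V^T *m V = 1%:M ->
  U^T *m W0 = 0 -> W0 *m V = 0 -> mx_lipschitz 1 W0 ->
  \sum_i sigma 0 i + mxdot (U *m V^T) H + mxdot W0 H <=
    nucnorm (U *m diag_mx sigma *m V^T + H).
Proof.
move=> hU hV hUW hWV hW.
have L0T : inT U V (U *m diag_mx sigma *m V^T).
  by exists (diag_mx sigma *m V^T)^T, 0; rewrite trmxK mul0mx addr0 mulmxA.
apply: le_trans (mxdot_le_nucnorm _ (mx_lipschitz_orth_sum U V hU hV hUW hWV hW)).
rewrite mxdotDl !mxdotDr mxdot_orth_svd // (mxdot_annihilator_inT U V hUW hWV L0T).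
by rewrite add0r.
Qed.

Section Sparsity.
Context {R : realType} {m n : nat}.

Definition l1_offsupp (S0 H : 'M[R]_(m, n)) : R :=
  \sum_i \sum_j (if S0 i j == 0 then `|H i j| else 0).

Lemma l1_offsupp_ge0 (S0 H : 'M[R]_(m, n)) : 0 <= l1_offsupp S0 H.
Proof. by do 2!apply: sumr_ge0 => ? _; case: ifP. Qed.

Lemma l1_offsupp_eq0 (S0 H : 'M[R]_(m, n)) : l1_offsupp S0 H = 0 -> POmega S0 H = H.
Proof.
have ge0 i j : 0 <= (if S0 i j == 0 then `|H i j| else 0) by case: ifP.
move=> /eqP; rewrite psumr_eq0 => [/allP H0|i _]; last exact: sumr_ge0.
apply/matrixP => i j; rewrite mxE; case: ifPn => // /negPn s0.
have /H0 := mem_index_enum i; rewrite /= psumr_eq0 // => /allP/(_ j (mem_index_enum j)).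
by rewrite s0 normr_eq0 => /eqP ->.
Qed.

Lemma le_linfnorm (F : 'M[R]_(m, n)) i j : `|F i j| <= linfnorm F.
Proof. exact: le_trans (le_bigmax _ (fun j => `|F i j|) j) (le_bigmax _ _ i). Qed.

Lemma norm_subgradient_entry (s f h g : R) : (s != 0 -> f = 0) -> `|f| <= g ->
  `|s| - (Num.sg s + f) * h + (1 - g) * (if s == 0 then `|h| else 0) <= `|s - h|.
Proof.
have [->|sn0] := eqVneq s 0 => [_ fg|/(_ isT) ->].
  rewrite normr0 sgr0 add0r sub0r normrN.
  have := ler_norm (- (f * h)); rewrite normrN normrM => fh.
  have := normr_ge0 h; nra.
move=> _; rewrite addr0 mulr0 addr0 normrEsg -mulrBr; apply: le_trans (ler_norm _) _.
by rewrite normrM normr_sg sn0 mul1r.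
Qed.

Lemma l1norm_subgradient (S0 F H : 'M[R]_(m, n)) g :
  POmega S0 F = 0 -> (forall i j, `|F i j| <= g) ->
  l1norm S0 - mxdot (sgnmx S0 + F) H + (1 - g) * l1_offsupp S0 H <= l1norm (S0 - H).
Proof.
move=> hF hg; rewrite /l1norm mxdotE /l1_offsupp mulr_sumr -sumrB -big_split.
apply: ler_sum => i _; rewrite mulr_sumr -sumrB -big_split; apply: ler_sum => j _.
rewrite !mxE; apply: norm_subgradient_entry => // s0.
by have := congr1 (fun M : 'M[R]_(m, n) => M i j) hF; rewrite !mxE s0.
Qed.

Lemma POmega_contract (S0 Z : 'M[R]_(m, n)) :
  mxdot (POmega S0 Z) (POmega S0 Z) <= mxdot Z Z.
Proof.
rewrite !mxdotE; apply: ler_sum => i _; apply: ler_sum => j _; rewrite !mxE.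
by case: ifP => _; rewrite ?lexx // mul0r -expr2 sqr_ge0.
Qed.

Lemma POmegaZ (S0 Z : 'M[R]_(m, n)) c : POmega S0 (c *: Z) = c *: POmega S0 Z.
Proof. by apply/matrixP => i j; rewrite !mxE; case: ifP; rewrite ?mulr0. Qed.

End Sparsity.

(* A nonzero H in T supported in Omega is fixed by P_Omega P_T, so after
   normalization it witnesses opnorm (P_Omega P_T) >= 1. *)
Lemma POmega_PT_trivial {R : realType} {n r} {U V : 'M[R]_(n, r)} {PT} {S0 H : 'M[R]_n} :
  is_orth_proj_T U V PT -> opnorm (fun X => POmega S0 (PT X)) < 1 ->
  inT U V H -> POmega S0 H = H -> H = 0.
Proof.
move=> hPT hnorm hH hO; apply/eqP; apply: contraTT hnorm => Hn0; rewrite -leNgt.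
have [c _ cu] := unit_multiple Hn0.
have fX : POmega S0 (PT (c *: H)) = c *: H.
  by rewrite (orth_proj_T_id U V hPT (inTZ U V c hH)) POmegaZ hO.
apply: ub_le_sup; last by exists (c *: H); rewrite /frob fX cu sqrtr1.
exists 1 => _ [X [hX1 ->]]; apply: le_trans hX1; apply: ler_wsqrtr.
exact: le_trans (POmega_contract _ _) (orth_proj_T_contract U V hPT X).
Qed.

Section Certificate.
Context {R : realType} {n r : nat}.
Context {L0 S0 W F : 'M[R]_n} {U V : 'M[R]_(n, r)} {sigma : 'rV[R]_r}.
Context {lambda b g : R} {PT : 'M[R]_n -> 'M[R]_n}.
Hypotheses (hU : U^T *m U = 1%:M) (hV : V^T *m V = 1%:M).
Hypotheses (hsigma : forall i, 0 <= sigma 0 i) (hL0 : L0 = U *m diag_mx sigma *m V^T).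
Hypotheses (hPT : is_orth_proj_T U V PT) (hlambda : 0 < lambda).
Hypotheses (hWF : U *m V^T + W = lambda *: (sgnmx S0 + F)) (hPTW : PT W = 0).
Hypotheses (hb : 0 <= b) (hWb : mx_lipschitz b W).
Hypotheses (hOF : POmega S0 F = 0) (hFg : forall i j, `|F i j| <= g).

Lemma objective_gap H : exists2 nu, 0 <= nu /\ (nu = 0 -> inT U V H) &
  nucnorm L0 + lambda * l1norm S0 + (1 - b) * nu +
      lambda * ((1 - g) * l1_offsupp S0 H) <=
    nucnorm (L0 + H) + lambda * l1norm (S0 - H).
Proof.
set G := (1%:M - U *m U^T) *m H *m (1%:M - V *m V^T).
have UG : U^T *m G = 0.
  by rewrite /G !mulmxA (mulmxBr U^T) mulmx1 mulmxA hU mul1mx subrr !mul0mx.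
have GV : G *m V = 0.
  by rewrite /G -mulmxA (mulmxBl _ _ V) mul1mx -(mulmxA V) hV mulmx1 subrr !mulmx0.
have [W0 [W0lip [N hN] [M hM] dom]] := polar_factor G.
have UW0 : U^T *m W0 = 0 by rewrite hM mulmxA UG mul0mx.
have W0V : W0 *m V = 0 by rewrite hN -mulmxA GV mulmx0.
have [nu0 nuG] := pairing_bound_ge0_eq0 dom.
have HGT : inT U V (H - G) := inT_complement U V H.
have pairH Y : (forall Z, inT U V Z -> mxdot Y Z = 0) -> mxdot Y H = mxdot Y G.
  by move=> hY; rewrite -[H](subrK G) mxdotDr hY // add0r.
exists (mxdot W0 G); first by split=> // nu00; move: HGT; rewrite (nuG nu00) subr0.
have nucH := nucnorm_subgradient _ _ sigma _ H hU hV UW0 W0V W0lip; rewrite -hL0 in nucH.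
rewrite (pairH W0 (fun Z => mxdot_annihilator_inT U V UW0 W0V)) in nucH.
have UVH : mxdot (U *m V^T) H = lambda * mxdot (sgnmx S0 + F) H - mxdot W G.
  rewrite -(pairH W (fun Z => orth_proj_T_eq0_orth U V hPT hPTW)).
  by rewrite -mxdotZl -hWF mxdotDl addrK.
have WG := dom b W hb hWb.
have l1H : lambda * (l1norm S0 - mxdot (sgnmx S0 + F) H + (1 - g) * l1_offsupp S0 H)
    <= lambda * l1norm (S0 - H).
  by rewrite ler_pM2l // l1norm_subgradient.
have nucL0 : nucnorm L0 <= \sum_i sigma 0 i by rewrite hL0 nucnorm_le_sum.
rewrite !mulrDr mulrN in l1H; rewrite mulrBl mul1r; lra.
Qed.

Hypotheses (hb1 : b < 1) (hg1 : g < 1).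
Hypothesis (hnorm : opnorm (fun X => POmega S0 (PT X)) < 1).

Lemma certificate_gap L S : L + S = L0 + S0 -> exists2 e, 0 <= e /\ (e = 0 -> L = L0) &
  nucnorm L0 + lambda * l1norm S0 + e <= nucnorm L + lambda * l1norm S.
Proof.
move=> hLS; set H := L - L0.
have -> : S = S0 - H by apply/(addrI L); rewrite hLS /H addrCA subKr addrC.
have -> : L = L0 + H by rewrite /H addrC subrK.
have [nu [nu0 nuT] gap] := objective_gap H.
have k0 := l1_offsupp_ge0 S0 H.
have b0 : 0 < 1 - b by rewrite subr_gt0.
have g0 : 0 < 1 - g by rewrite subr_gt0.
exists ((1 - b) * nu + lambda * ((1 - g) * l1_offsupp S0 H)); last by rewrite addrA.
have e1 : 0 <= (1 - b) * nu by rewrite mulr_ge0 // ltW.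
have e2 : 0 <= lambda * ((1 - g) * l1_offsupp S0 H) by rewrite !mulr_ge0 // ltW.
split=> [|/eqP]; first exact: addr_ge0.
rewrite paddr_eq0 // !mulf_eq0 (gt_eqF b0) (gt_eqF g0) (gt_eqF hlambda) /= => /andP[/eqP/nuT HT /eqP/l1_offsupp_eq0 HO].
by rewrite (POmega_PT_trivial hPT hnorm HT HO) addr0.
Qed.

End Certificate.

Theorem lemma2p3 (R : realType) (n r : nat) (L0 S0 : 'M[R]_n)
  (U V : 'M[R]_(n, r)) (sigma : 'rV[R]_r) (lambda : R)
  (PT : 'M[R]_n -> 'M[R]_n)
  (hU : U^T *m U = 1%:M) (hV : V^T *m V = 1%:M)
  (hsigma : forall i, 0 < sigma 0 i)
  (hsvd : L0 = U *m diag_mx sigma *m V^T)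
  (hlambda : 0 < lambda)
  (hPT : is_orth_proj_T U V PT)
  (hnorm : opnorm (fun X => POmega S0 (PT X)) < 1) :
  (exists W F : 'M[R]_n,
     U *m V^T + W = lambda *: (sgnmx S0 + F) /\
     PT W = 0 /\ specnorm W < 1 /\ POmega S0 F = 0 /\ linfnorm F < 1) ->
  (forall L S : 'M[R]_n, L + S = L0 + S0 ->
     nucnorm L0 + lambda * l1norm S0 <= nucnorm L + lambda * l1norm S) /\
  (forall L S : 'M[R]_n, L + S = L0 + S0 ->
     nucnorm L + lambda * l1norm S = nucnorm L0 + lambda * l1norm S0 ->
     L = L0 /\ S = S0).
Proof.
move=> [W [F [hWF [hPTW [hW [hOF hF]]]]]].
have [b [b0 bW hWb]] := specnorm_lipschitz W.
have gap := certificate_gap hU hV (fun i => ltW (hsigma i)) hsvd hPT hlambda hWF hPTW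
  b0 hWb hOF (le_linfnorm F) (le_lt_trans bW hW) hF hnorm.
split=> L S hLS; have [e [e0 eL] le_e] := gap L S hLS; first lra.
move=> opt; have L_eq : L = L0 by apply: eL; lra.
by split=> //; apply: (addrI L0); rewrite -hLS L_eq.
Qed.
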